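(* Let $g:\mathbb{C}\to\mathbb{C}$ be holomorphic at $0$ with $g(0)=0$ and $g'(0)\neq 0$, let $\varphi:\mathbb{N}\to\mathbb{C}\setminus\{0\}$, and let $a$ be a real number. Let $(P_n(x))_{n\ge 0}$ be a sequence of Appell polynomials of type $(g,\varphi)$ with generating function $f$, i.e. $f$ is holomorphic at $0$, $f(0)\neq 0$, and $$\sum_{n\ge 0}P_n(x)\frac{t^n}{\varphi(0)\varphi(1)\cdots\varphi(n)}=f(t)e^{x g(t)}$$ for all $x\in\mathbb{C}$ and all $t$ near $0$. Put $h(t)=f(t)e^{\frac{a}{2}g(t)}$. Then $P_n(a-x)=(-1)^nP_n(x)$ for all $n\ge 0$ and all $x$ if and only if $g$ is an odd function and $h$ is an even function (near $0$).
   Context: Here $\mathbb{N}=\{0,1,2,\dots\}$. A sequence of polynomials $(P_n)_n$ is called a sequence of Appell polynomials of type $(g,\varphi)$ if there exists a function $f$ holomorphic at $0$ with $f(0)\neq0$ (its generating function) such that the displayed generating-function identity holds. *)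

From Stdlib Require Import Reals.
From Coquelicot Require Export Coquelicot.
Open Scope C_scope.

Definition cderiv (f : C -> C) (z l : C) : Prop :=
  @is_derive C_AbsRing C_NormedModule f z l.

Definition holomorphic_at0 (f : C -> C) : Prop :=
  exists r : R, (0 < r)%R /\ forall z : C, (Cmod z < r)%R -> exists l, cderiv f z l.

Definition cexp (z : C) : C :=
  (exp (Re z) * cos (Im z), exp (Re z) * sin (Im z))%R.

Fixpoint cpow (z : C) (n : nat) : C :=
  match n with O => 1 | S m => z * cpow z m end.

Fixpoint phiprod (phi : nat -> C) (n : nat) : C :=
  match n with O => phi O | S m => phiprod phi m * phi (S m) end.

Definition is_poly_fun (p : C -> C) : Prop :=
  exists (d : nat) (c : nat -> C), forall x : C,
    p x = sum_n (fun k => c k * cpow x k) d.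

Definition appell_gen (g : C -> C) (phi : nat -> C) (P : nat -> C -> C)
    (f : C -> C) : Prop :=
  (forall n, is_poly_fun (P n)) /\
  holomorphic_at0 f /\ f 0 <> 0 /\
  forall x : C, exists r : R, (0 < r)%R /\ forall t : C, (Cmod t < r)%R ->
    is_series (fun n => P n x * cpow t n / phiprod phi n) (f t * cexp (x * g t)).

From Stdlib Require Import Reals Lra Lia.
From Coquelicot Require Import Coquelicot.
Open Scope C_scope.

(* Comparing the generating function at [a - x] with the one at [x] evaluated
   at [-t], uniqueness of power series coefficients shows that the symmetry
   [P_n(a - x) = (-1)^n P_n(x)] holds at a given [x] iff
   [f(t) e^{(a-x) g(t)} = f(-t) e^{x g(-t)}] near [0].  For [x = a/2] this says
   that [h] is even; for [x = a/2 + 1], after dividing by the first identity,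
   it says [e^{g(t) + g(-t)} = 1], hence [g(t) + g(-t) = 0] once [t] is so
   small that [|g(t)|, |g(-t)| < 1 < pi/2].  Conversely an odd [g] and an even
   [h] give the identity for every [x]. *)

Lemma cexp_add (u v : C) : cexp (u + v) = cexp u * cexp v.
Proof.
  destruct u as [u1 u2], v as [v1 v2]; unfold cexp, Cmult; simpl.
  rewrite exp_plus, cos_plus, sin_plus. f_equal; ring.
Qed.

Lemma cexp_0 : cexp 0 = 1.
Proof.
  unfold cexp; simpl. rewrite exp_0, cos_0, sin_0. unfold RtoC. f_equal; ring.
Qed.

Lemma cexp_neq0 (u : C) : cexp u <> 0.
Proof.
  intro H. assert (H1 := f_equal fst H). assert (H2 := f_equal snd H).
  unfold cexp in *; simpl in *.
  assert (E := exp_pos (Re u)).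
  apply Rmult_integral in H1; apply Rmult_integral in H2.
  destruct H1; [lra|]. destruct H2; [lra|].
  apply (cos_sin_0 (Im u)); auto.
Qed.

Lemma cexp_eq1_Cmod_lt_PI (w : C) : cexp w = 1 -> (Cmod w < PI)%R -> w = 0.
Proof.
  destruct w as [w1 w2]. intros H Hm.
  assert (H1 := f_equal fst H). assert (H2 := f_equal snd H).
  unfold cexp, Re, Im in H1, H2; simpl in H1, H2.
  assert (E := exp_pos w1).
  assert (Hw2 : (Rabs w2 < PI)%R).
  { eapply Rle_lt_trans; [|exact Hm].
    eapply Rle_trans; [apply Rmax_r|apply (Rmax_Cmod (w1, w2))]. }
  assert (Hs : sin w2 = 0%R) by (apply Rmult_integral in H2; destruct H2; [lra|auto]).
  destruct (sin_eq_0_0 _ Hs) as [k Hk].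
  assert (k = 0%Z) as ->.
  { destruct (Z.eq_dec k 0) as [|Hn]; auto. exfalso.
    assert (1 <= Rabs (IZR k))%R by (rewrite <- abs_IZR; apply IZR_le; lia).
    rewrite Hk, Rabs_mult, (Rabs_right PI) in Hw2 by (left; apply PI_RGT_0).
    assert (Hpi := PI_RGT_0). nra. }
  rewrite Rmult_0_l in Hk; subst w2.
  rewrite cos_0, Rmult_1_r, <- exp_0 in H1. apply exp_inv in H1. now subst w1.
Qed.

Lemma cexp_inj_Cmod_lt_PI (u v : C) :
  cexp u = cexp v -> (Cmod (u - v) < PI)%R -> u = v.
Proof.
  intros E Huv.
  assert (Hv : cexp v * cexp (- v) = 1) by (rewrite <- cexp_add, Cplus_opp_r; apply cexp_0).
  assert (Hd : cexp (u - v) = 1) by (unfold Cminus; rewrite cexp_add, E; exact Hv).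
  apply cexp_eq1_Cmod_lt_PI in Hd; [|exact Huv].
  replace u with (u - v + v) by ring. rewrite Hd. ring.
Qed.

Lemma cpow_opp (t : C) n : cpow (- t) n = cpow (-1) n * cpow t n.
Proof. induction n; simpl. ring. rewrite IHn. ring. Qed.

Lemma cpow_RtoC (t : R) n : cpow (RtoC t) n = RtoC (t ^ n).
Proof. induction n; simpl. reflexivity. now rewrite IHn, RtoC_mult. Qed.

Lemma phiprod_neq0 (phi : nat -> C) : (forall n, phi n <> 0) -> forall n, phiprod phi n <> 0.
Proof. intros H n; induction n; simpl; auto using Cmult_neq_0. Qed.

Definition near0 (P : C -> Prop) : Prop :=
  exists r : R, (0 < r)%R /\ forall t : C, (Cmod t < r)%R -> P t.

Lemma near0_mono {P Q : C -> Prop} :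
  (forall t, P t -> Q t) -> near0 P -> near0 Q.
Proof. intros PQ [r [Hr HP]]. exists r. auto. Qed.

Lemma near0_and {P Q : C -> Prop} :
  near0 P -> near0 Q -> near0 (fun t => P t /\ Q t).
Proof.
  intros [r1 [Hr1 H1]] [r2 [Hr2 H2]].
  exists (Rmin r1 r2). split; [now apply Rmin_glb_lt|].
  intros t Ht. apply Rmin_Rgt_l in Ht as [Ht1 Ht2]. auto.
Qed.

Lemma near0_opp {P : C -> Prop} : near0 P -> near0 (fun t => P (- t)).
Proof.
  intros [r [Hr H]]. exists r. split; [exact Hr|].
  intros t Ht. apply H. now rewrite Cmod_opp.
Qed.

Lemma holomorphic_at0_continuous (f : C -> C) : holomorphic_at0 f ->
  forall eps : R, (0 < eps)%R -> near0 (fun t => (Cmod (f t - f 0) < eps)%R).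
Proof.
  intros [r [Hr Hd]] eps He.
  destruct (Hd 0) as [l Hl]; [rewrite Cmod_0; exact Hr|].
  assert (Hc := ex_derive_continuous (K:=C_AbsRing) (V:=C_NormedModule) f (RtoC 0) (ex_intro _ l Hl)).
  assert (Hball : locally (f 0) (ball_norm (f 0) eps)).
  { apply (locally_le_locally_norm (K:=C_AbsRing) (V:=C_NormedModule)).
    apply (locally_norm_ball_norm (K:=C_AbsRing) (V:=C_NormedModule) _ (mkposreal eps He)). }
  specialize (Hc _ Hball). unfold filtermap in Hc. apply locally_C in Hc.
  apply (locally_norm_le_locally (K:=C_AbsRing) (V:=C_NormedModule)) in Hc.
  destruct Hc as [d Hd'].
  exists d. split; [apply cond_pos|]. intros t Ht. apply (Hd' t).
  change (Cmod (t - 0) < d)%R. now replace (t - 0) with t by ring.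
Qed.

Lemma is_series_C_ext (u v : nat -> C) (l : C) :
  (forall n, u n = v n) -> is_series u l -> is_series v l.
Proof. apply is_series_ext. Qed.

Lemma is_series_C_unique (u : nat -> C) (l1 l2 : C) :
  is_series u l1 -> is_series u l2 -> l1 = l2.
Proof. exact (filterlim_locally_unique (K:=C_AbsRing) (V:=C_NormedModule) (sum_n u) l1 l2). Qed.

Lemma sum_n_Re_Im (u : nat -> C) n :
  sum_n u n = (sum_n (fun k => Re (u k)) n, sum_n (fun k => Im (u k)) n).
Proof.
  induction n as [|n IH]; [now rewrite !sum_O; destruct (u O)|].
  rewrite !sum_Sn, IH. reflexivity.
Qed.

Lemma is_series_Re_Im (u : nat -> C) (l : C) : is_series u l ->
  is_series (fun n => Re (u n)) (Re l) /\ is_series (fun n => Im (u n)) (Im l).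
Proof.
  intro H. split; apply filterlim_locally; intro eps;
    destruct (proj1 (filterlim_locally _ _) H eps) as [N HN]; exists N;
    intros k Hk; destruct (HN k Hk) as [Hre Him]; rewrite sum_n_Re_Im in Hre, Him;
    assumption.
Qed.

Lemma real_series_zero_coef (b : nat -> R) (r : R) : (0 < r)%R ->
  (forall t : R, (Rabs t < r)%R -> is_series (fun n => b n * t ^ n)%R 0%R) ->
  forall n, b n = 0%R.
Proof.
  intros Hr H n.
  assert (Hrad : Rbar_lt 0%R (CV_radius b)).
  { assert (Hs : is_series (fun n => b n * (r/2) ^ n)%R 0%R)
      by (apply H; rewrite Rabs_right; lra).
    destruct (filterlim_bounded (K:=R_AbsRing) (V:=R_NormedModule) (fun n => b n * (r/2) ^ n)%R)
      as [M HM].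
    { exists 0%R. apply ex_series_lim_0. eexists; exact Hs. }
    apply Rbar_lt_le_trans with (r/2)%R; [simpl; lra|].
    apply CV_radius_bounded. exists M. intro k. apply HM. }
  assert (Hzero : locally 0%R (fun t => PSeries b t = 0%R)).
  { exists (mkposreal r Hr). intros t Ht.
    apply is_series_unique, H.
    change (Rabs (t - 0) < r)%R in Ht. now rewrite Rminus_0_r in Ht. }
  assert (Hd := Derive_n_coef b n Hrad).
  rewrite (Derive_n_ext_loc _ (fun _ => 0%R) n 0%R Hzero) in Hd.
  assert (Hf := INR_fact_neq_0 n).
  destruct n as [|n].
  - simpl in Hd, Hf. lra.
  - rewrite Derive_n_const in Hd. symmetry in Hd.
    apply Rmult_integral in Hd as [Hd|Hd]; [exact Hd|contradiction].
Qed.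

Lemma series_zero_coef (b : nat -> C) :
  near0 (fun t => is_series (fun n => b n * cpow t n) (0 : C)) -> forall n, b n = 0.
Proof.
  intros [r [Hr H]] n.
  assert (Hreal : forall t : R, (Rabs t < r)%R ->
            is_series (fun n => Re (b n) * t ^ n)%R 0%R /\
            is_series (fun n => Im (b n) * t ^ n)%R 0%R).
  { intros t Ht. rewrite <- Cmod_R in Ht.
    destruct (is_series_Re_Im _ _ (H _ Ht)) as [Hre Him].
    split; [eapply is_series_ext; [|exact Hre]|eapply is_series_ext; [|exact Him]];
      intro k; cbv beta; rewrite cpow_RtoC; destruct (b k); simpl; ring. }
  assert (Hre := real_series_zero_coef _ r Hr (fun t Ht => proj1 (Hreal t Ht)) n).
  assert (Him := real_series_zero_coef _ r Hr (fun t Ht => proj2 (Hreal t Ht)) n).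
  now apply injective_projections.
Qed.

Lemma series_reflection_iff (u v : nat -> C) (A B : C -> C) :
  near0 (fun t => is_series (fun n => u n * cpow t n) (A t)) ->
  near0 (fun t => is_series (fun n => v n * cpow t n) (B t)) ->
  (forall n, u n = cpow (-1) n * v n) <-> near0 (fun t => A t = B (- t)).
Proof.
  intros HA HB. split.
  - intro Huv. apply near0_mono with (2 := near0_and HA (near0_opp HB)).
    intros t [SA SB]. apply (is_series_C_unique _ _ _ SA).
    apply is_series_C_ext with (2 := SB).
    intro n; cbv beta. rewrite Huv, cpow_opp. ring.
  - intro HAB.
    assert (Hw : forall n, u n - cpow (-1) n * v n = 0).
    { apply series_zero_coef.
      apply near0_mono with (2 := near0_and (near0_and HA (near0_opp HB)) HAB).
      intros t [[SA SB] E].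
      assert (S := is_series_minus _ _ _ _ SA SB).
      change (is_series (fun n => u n * cpow t n - v n * cpow (- t) n) (A t - B (- t))) in S.
      rewrite E in S; replace (B (- t) - B (- t)) with (0 : C) in S by ring.
      apply is_series_C_ext with (2 := S).
      intro n; cbv beta. rewrite cpow_opp. ring. }
    intro n. specialize (Hw n).
    replace (u n) with (u n - cpow (-1) n * v n + cpow (-1) n * v n) by ring.
    rewrite Hw. ring.
Qed.

Lemma RtoC_half (a : R) : RtoC a = RtoC (a / 2) + RtoC (a / 2).
Proof. rewrite <- RtoC_plus. f_equal. field. Qed.

Definition appell_reflection (f g : C -> C) (a : R) (x : C) : Prop :=
  near0 (fun t => f t * cexp ((RtoC a - x) * g t) = f (- t) * cexp (x * g (- t))).

Lemma appell_gen_series (g : C -> C) (phi : nat -> C) (P : nat -> C -> C) (f : C -> C) :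
  appell_gen g phi P f -> forall x,
  near0 (fun t => is_series (fun n => P n x / phiprod phi n * cpow t n) (f t * cexp (x * g t))).
Proof.
  intros [_ [_ [_ Hs]]] x. apply near0_mono with (2 := Hs x).
  intros t St. apply is_series_C_ext with (2 := St).
  intro n; cbv beta. unfold Cdiv. ring.
Qed.

Lemma appell_symmetric_at_iff (g : C -> C) (phi : nat -> C) (a : R)
    (P : nat -> C -> C) (f : C -> C) :
  (forall n, phi n <> 0) -> appell_gen g phi P f -> forall x,
  (forall n, P n (RtoC a - x) = cpow (-1) n * P n x) <-> appell_reflection f g a x.
Proof.
  intros Hphi HP x.
  assert (Hc := phiprod_neq0 phi Hphi).
  etransitivity;
    [|exact (series_reflection_iff _ _ _ _ (appell_gen_series _ _ _ _ HP (RtoC a - x))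
                                           (appell_gen_series _ _ _ _ HP x))].
  split; intros H n; specialize (H n).
  - rewrite H. field. apply Hc.
  - replace (P n (RtoC a - x)) with (P n (RtoC a - x) / phiprod phi n * phiprod phi n)
      by (field; apply Hc).
    rewrite H. field. apply Hc.
Qed.

Lemma appell_reflection_odd_even (f g : C -> C) (a : R) :
  holomorphic_at0 f -> f 0 <> 0 -> holomorphic_at0 g -> g 0 = 0 ->
  (forall x, appell_reflection f g a x) ->
  near0 (fun t => g (- t) = - g t /\
    f (- t) * cexp (RtoC (a / 2) * g (- t)) = f t * cexp (RtoC (a / 2) * g t)).
Proof.
  intros Hf Hf0 Hg Hg0 Hrefl.
  assert (Hfne : near0 (fun t => f t <> 0)).
  { apply near0_mono with (2 := holomorphic_at0_continuous f Hf _ (proj1 (Cmod_gt_0 _) Hf0)).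
    intros t Ht Z. rewrite Z in Ht.
    replace (0 - f 0) with (- f 0) in Ht by ring. rewrite Cmod_opp in Ht. lra. }
  assert (Hgsmall : near0 (fun t => (Cmod (g t) < 1)%R)).
  { apply near0_mono with (2 := holomorphic_at0_continuous g Hg _ Rlt_0_1).
    intro t. rewrite Hg0. replace (g t - 0) with (g t) by ring. auto. }
  apply near0_mono with (2 := near0_and
    (near0_and (Hrefl (RtoC (a / 2))) (Hrefl (RtoC (a / 2) + 1)))
    (near0_and Hfne (near0_and Hgsmall (near0_opp Hgsmall)))).
  intros t [[Ehalf Eshift] [Hft [HG HG']]].
  set (G := g t) in *; set (G' := g (- t)) in *.
  set (h := f t * cexp (RtoC (a / 2) * G)).
  assert (Heven : h = f (- t) * cexp (RtoC (a / 2) * G')).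
  { rewrite <- Ehalf. unfold h. do 3 f_equal. rewrite (RtoC_half a) at 1. ring. }
  assert (Hcancel : h * cexp (- G) = h * cexp G').
  { unfold h at 1. rewrite <- Cmult_assoc, <- cexp_add.
    replace (RtoC (a / 2) * G + - G) with ((RtoC a - (RtoC (a / 2) + 1)) * G)
      by (rewrite (RtoC_half a); ring).
    rewrite Eshift, Heven, <- Cmult_assoc, <- cexp_add. do 2 f_equal. ring. }
  assert (Hh : h <> 0) by (apply Cmult_neq_0; [exact Hft|apply cexp_neq0]).
  apply (f_equal (Cmult (/ h))) in Hcancel.
  rewrite !Cmult_assoc, Cinv_l, !Cmult_1_l in Hcancel by exact Hh.
  apply cexp_inj_Cmod_lt_PI in Hcancel.
  - split; [now rewrite Hcancel|now rewrite <- Heven].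
  - eapply Rle_lt_trans; [apply Cmod_triangle|].
    rewrite !Cmod_opp. assert (Hpi := PI2_1). lra.
Qed.

Lemma odd_even_appell_reflection (f g : C -> C) (a : R) :
  near0 (fun t => g (- t) = - g t /\
    f (- t) * cexp (RtoC (a / 2) * g (- t)) = f t * cexp (RtoC (a / 2) * g t)) ->
  forall x, appell_reflection f g a x.
Proof.
  intros Hoe x. apply near0_mono with (2 := Hoe).
  intros t [Hodd Heven]. rewrite Hodd in *.
  replace (x * - g t) with (RtoC (a / 2) * - g t + (RtoC (a / 2) - x) * g t) by ring.
  replace ((RtoC a - x) * g t) with (RtoC (a / 2) * g t + (RtoC (a / 2) - x) * g t)
    by (rewrite (RtoC_half a); ring).
  rewrite !cexp_add, !Cmult_assoc, Heven. reflexivity.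
Qed.

Theorem mainTheorem1 (g : C -> C) (phi : nat -> C) (a : R)
  (P : nat -> C -> C) (f : C -> C) :
  holomorphic_at0 g -> g 0 = 0 -> (exists l : C, cderiv g 0 l /\ l <> 0) ->
  (forall n, phi n <> 0) ->
  appell_gen g phi P f ->
  ((forall (n : nat) (x : C), P n (RtoC a - x) = cpow (-1) n * P n x) <->
   exists r : R, (0 < r)%R /\ forall t : C, (Cmod t < r)%R ->
     g (- t) = - g t /\
     f (- t) * cexp (RtoC (a / 2) * g (- t)) = f t * cexp (RtoC (a / 2) * g t)).
Proof.
  intros Hg Hg0 _ Hphi HP.
  pose proof HP as (_ & Hf & Hf0 & _).
  pose proof (appell_symmetric_at_iff g phi a P f Hphi HP) as Hsym.
  transitivity (forall x, appell_reflection f g a x).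
  - split.
    + intros H x. apply Hsym. intro n. apply H.
    + intros H n x. now apply Hsym.
  - split.
    + exact (appell_reflection_odd_even f g a Hf Hf0 Hg Hg0).
    + exact (odd_even_appell_reflection f g a).
Qed.
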